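(* In the setting of the context, with step sizes $\alpha_k=\frac{a}{b+k}$ where $a>0$, $b>1$ and $\frac ab\le\frac1{2M\tilde L}$, for every $n\ge0$ and $0\le k\le n$, $$B_k\le\frac{a^2M\tilde Lc(A)\sigma_{\max}^2}{b+k-1}\Big(\frac{b+k+1}{b+n+1}\Big)^{a\sigma_{\min}^2}.$$
   Context: Standing setting: $M\ge N$, $A\in\mathbb{R}^{M\times N}$ of full column rank with rows $a_1,\dots,a_M$; singular values $\sigma_1\ge\dots\ge\sigma_N>0$, $\sigma_{\max}=\sigma_1$, $\sigma_{\min}=\sigma_N$, $c(A)=\sigma_{\max}^2/\sigma_{\min}^2$, $\tilde L=\max_i\|a_i\|^2$. Fix $\ell\in\{1,\dots,N\}$. For $\alpha>0$ put $A(\alpha)=1-2\alpha\sigma_\ell^2$, $B(\alpha)=\alpha^2M\tilde Lc(A)\sigma_{\max}^2$, $p(\alpha)=1-\alpha\sigma_{\min}^2$. For fixed $n$ and $0\le k\le n$: $B_k=\sum_{j=k}^n\Big(\prod_{i=j+1}^nA(\alpha_i)\Big)B(\alpha_j)\Big(\prod_{i=k}^{j-1}p(\alpha_i)\Big)$ (empty products equal $1$). (The scalars $a,b$ in the step size are unrelated to the rows $a_i$.) *)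

From HB Require Import structures.
From mathcomp Require Import all_boot all_order all_algebra.
From mathcomp Require Import all_classical all_reals all_analysis.
Set Implicit Arguments. Unset Strict Implicit. Unset Printing Implicit Defensive.
Import Order.TTheory GRing.Theory Num.Theory.
Local Open Scope ring_scope.

Section Defs.
Variable R : realType.

Definition smax (N : nat) (s : 'I_N -> R) : R := \big[Num.max/0]_(i < N) s i.
Definition smin (N : nat) (s : 'I_N -> R) : R := \big[Num.min/smax s]_(i < N) s i.

Definition condA (N : nat) (s : 'I_N -> R) : R := smax s ^+ 2 / smin s ^+ 2.

Definition Ltilde (M N : nat) (A : 'M[R]_(M, N)) : R :=
  \big[Num.max/0]_(i < M) \sum_(j < N) A i j ^+ 2.

Definition Afac (sl al : R) : R := 1 - 2 * al * sl ^+ 2.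
Definition Bfac (Mr Lt c smx al : R) : R := al ^+ 2 * Mr * Lt * c * smx ^+ 2.
Definition pfac (smn al : R) : R := 1 - al * smn ^+ 2.

Definition Bk (sl Mr Lt c smx smn : R) (alpha : nat -> R) (n k : nat) : R :=
  \sum_(k <= j < n.+1)
    (\prod_(j.+1 <= i < n.+1) Afac sl (alpha i)) * Bfac Mr Lt c smx (alpha j)
    * (\prod_(k <= i < j) pfac smn (alpha i)).

End Defs.

From HB Require Import structures.
From mathcomp Require Import all_boot all_order all_algebra.
From mathcomp Require Import all_classical all_reals all_analysis.
From mathcomp Require Import ring lra.
Import Order.TTheory GRing.Theory Num.Theory.

Set Implicit Arguments.
Unset Strict Implicit.
Unset Printing Implicit Defensive.

Local Open Scope ring_scope.

(* Since sigma_l^2 <= tr(A^T A) <= M Ltilde, the step-size condition gives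
   alpha_i sigma_l^2 <= 1/2; with sigma_min <= sigma_l this yields
   0 <= A(alpha_i) <= p(alpha_i); since alpha_i decreases, p(alpha_i) increases
   in i, so the j-th summand of B_k is at most B(alpha_j) prod_{k<i<=n} p(alpha_i).
   The sum of the B(alpha_j) ~ 1/(b+j)^2 telescopes against 1/(b+j-1) - 1/(b+j),
   and each factor 1 - t/x is at most (x/(x+1))^t because ln(1 + 1/x) <= 1/x, so
   the product of the p(alpha_i) telescopes to ((b+k+1)/(b+n+1))^t. *)

Lemma sum_inv_sqr_le (R : realFieldType) (c : R) (m n : nat) :
  1 < c + m%:R -> (m <= n)%N ->
  \sum_(m <= j < n) ((c + j%:R) ^+ 2)^-1
    <= (c + m%:R - 1)^-1 - (c + n%:R - 1)^-1.
Proof.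
move=> c_gt1 mn.
have -> : (c + m%:R - 1)^-1 - (c + n%:R - 1)^-1
    = \sum_(m <= j < n) ((c + j%:R - 1)^-1 - (c + j%:R)^-1).
  rewrite (telescope_sumr_eq (fun j => - (c + j%:R - 1)^-1)) //.
  - by rewrite opprK addrC.
  - by move=> j _; rewrite -natr1 addrA addrK opprK [RHS]addrC.
apply: ler_sum_nat => j /andP[mj _].
have x_gt1 : 1 < c + j%:R by apply: lt_le_trans c_gt1 _; rewrite lerD2l ler_nat.
have -> : (c + j%:R - 1)^-1 - (c + j%:R)^-1 = ((c + j%:R - 1) * (c + j%:R))^-1.
  by field; apply/andP; split; apply/eqP; lra.
rewrite ler_pV2 ?inE ?unitfE; first nra.
- by apply/andP; split; [apply/eqP; nra | nra].
- by apply/andP; split; [apply/eqP; nra | nra].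
Qed.

Lemma one_sub_div_le_powR (R : realType) (t x : R) : 0 <= t -> 0 < x ->
  1 - t / x <= (x / (x + 1)) `^ t.
Proof.
move=> t_ge0 x_gt0.
have x1_gt0 : 0 < x / (x + 1) by rewrite divr_gt0 // addr_gt0.
rewrite /powR gt_eqF //.
apply: le_trans (expR_ge1Dx _) _; rewrite ler_expR.
have -> : x / (x + 1) = (1 + x^-1)^-1.
  by rewrite -invf_div mulrDl divff ?mul1r ?gt_eqF.
rewrite lnV ?posrE ?addr_gt0 ?invr_gt0 // mulrN lerN2 mulrC [t / x]mulrC.
rewrite ler_wpM2r // le_ln1Dx //.
by apply: lt_trans (ltrN10 _) _; rewrite invr_gt0.
Qed.

Lemma prod_one_sub_div_le_powR (R : realType) (c t : R) (m n : nat) :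
  0 < c + m%:R -> 0 <= t -> (m <= n)%N ->
  (forall i, (m <= i < n)%N -> 0 <= 1 - t / (c + i%:R)) ->
  \prod_(m <= i < n) (1 - t / (c + i%:R)) <= ((c + m%:R) / (c + n%:R)) `^ t.
Proof.
move=> cm_gt0 t_ge0 /subnKC <-; elim: (n - m)%N => [|d IH] factor_ge0.
  by rewrite addn0 big_geq // divff ?powR1 ?gt_eqF.
have cmd_gt0 : 0 < c + (m + d)%:R.
  by apply: lt_le_trans cm_gt0 _; rewrite lerD2l ler_nat leq_addr.
have factor_ge0' i : (m <= i < m + d)%N -> 0 <= 1 - t / (c + i%:R).
  by case/andP=> mi id; rewrite factor_ge0 // mi addnS ltnS ltnW.
rewrite addnS big_nat_recr ?leq_addr //= -natr1 addrA.
apply: le_trans (ler_pM _ _ (IH factor_ge0') (one_sub_div_le_powR t_ge0 cmd_gt0)) _.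
- by rewrite big_nat_cond; apply: prodr_ge0 => i /andP[/factor_ge0'].
- by apply: factor_ge0; rewrite leq_addr addnS ltnSn.
have cmd1_gt0 : 0 < c + (m + d)%:R + 1 by rewrite addr_gt0.
by rewrite -powRM ?mulrA ?divfK ?gt_eqF // divr_ge0 ?ltW.
Qed.

Lemma sum_prod_le_sum_mul_prod (R : numDomainType) (u v w : nat -> R) (k n : nat) :
  (forall i, 0 <= u i <= v i) -> (forall i, v i <= v i.+1) -> (forall j, 0 <= w j) ->
  \sum_(k <= j < n.+1) (\prod_(j.+1 <= i < n.+1) u i) * w j * \prod_(k <= i < j) v i
    <= (\sum_(k <= j < n.+1) w j) * \prod_(k.+1 <= i < n.+1) v i.
Proof.
move=> uv v_incr w_ge0.
have v_ge0 i : 0 <= v i by case/andP: (uv i) => /le_trans; apply.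
rewrite mulr_suml; apply: ler_sum_nat => j /andP[kj jn].
rewrite mulrAC mulrC ler_wpM2l // [leRHS](@big_cat_nat _ _ _ j.+1) //= [leLHS]mulrC.
apply: ler_pM.
- by apply: prodr_ge0 => i _; apply: v_ge0.
- by apply: prodr_ge0 => i _; case/andP: (uv i).
- by rewrite big_add1 /=; apply: ler_prod => i _; rewrite v_ge0 v_incr.
- by apply: ler_prod => i _; apply: uv.
Qed.

Lemma le_div_add_nat (R : numFieldType) (a b : R) (i j : nat) :
  0 <= a -> 0 < b -> (i <= j)%N -> a / (b + j%:R) <= a / (b + i%:R).
Proof.
move=> a_ge0 b_gt0 ij; rewrite ler_wpM2l // lef_pV2 ?posrE ?ltr_wpDr ?ler0n //.
by rewrite lerD2l ler_nat.
Qed.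

Lemma sqr_singular_value_le (R : realType) (M N : nat) (A : 'M[R]_(M, N))
    (sigma : 'I_N -> R) (V : 'M[R]_N) (l : 'I_N) :
  V^T *m V = 1%:M ->
  A^T *m A = V *m diag_mx (\row_i (sigma i ^+ 2)) *m V^T ->
  sigma l ^+ 2 <= M%:R * Ltilde A.
Proof.
move=> VTV AtA.
have tr_sigma : \tr (A^T *m A) = \sum_(i < N) sigma i ^+ 2.
  rewrite AtA mxtrace_mulC mulmxA VTV mul1mx mxtrace_diag.
  by apply: eq_bigr => i _; rewrite mxE.
have tr_rows : \tr (A^T *m A) = \sum_(j < M) \sum_(i < N) A j i ^+ 2.
  rewrite /mxtrace exchange_big /=; apply: eq_bigr => i _.
  by rewrite mxE; apply: eq_bigr => j _; rewrite !mxE expr2.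
apply: (@le_trans _ _ (\sum_(i < N) sigma i ^+ 2)).
  by rewrite (bigD1 l) //= lerDl sumr_ge0 // => i _; apply: sqr_ge0.
rewrite -tr_sigma tr_rows mulr_natl -[M in _ *+ M]card_ord -sumr_const.
by apply: ler_sum => j _; rewrite /Ltilde (bigD1 j) //= le_max lexx.
Qed.

Lemma mul_le_half (R : realFieldType) (x y z : R) :
  0 <= z -> z <= y -> 0 < y -> x <= (2 * y)^-1 -> x * z <= 2^-1.
Proof.
move=> z_ge0 zy y_gt0 xy; apply: le_trans (ler_wpM2r z_ge0 xy) _.
rewrite invfM -mulrA -[leRHS]mulr1 ler_wpM2l ?invr_ge0 ?ler0n //.
by rewrite mulrC ler_pdivrMr // mul1r.
Qed.

Lemma le_smax (R : realType) (N : nat) (s : 'I_N -> R) (i : 'I_N) : s i <= smax s.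
Proof. by rewrite /smax (bigD1 i) //= le_max lexx. Qed.

Lemma smin_le (R : realType) (N : nat) (s : 'I_N -> R) (i : 'I_N) : smin s <= s i.
Proof. by rewrite /smin (bigD1 i) //= ge_min lexx. Qed.

Lemma smin_gt0 (R : realType) (N : nat) (s : 'I_N -> R) :
  0 < smax s -> (forall i, 0 < s i) -> 0 < smin s.
Proof.
move=> smax_gt0 s_gt0; apply: (big_ind (fun x => 0 < x)) => // x y x_gt0 y_gt0.
by rewrite lt_min x_gt0.
Qed.

Lemma Afac_ge0 (R : realType) (s al : R) : al * s ^+ 2 <= 2^-1 -> 0 <= Afac s al.
Proof. by rewrite /Afac; lra. Qed.

Lemma Afac_le_pfac (R : realType) (s m al : R) :
  0 <= al -> 0 <= m <= s -> Afac s al <= pfac m al.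
Proof.
move=> al_ge0 /andP[m_ge0 ms].
have ms2 : m ^+ 2 <= s ^+ 2 by rewrite ler_sqr ?nnegrE // (le_trans m_ge0 ms).
have := ler_wpM2l al_ge0 ms2; have : 0 <= al * s ^+ 2 by rewrite mulr_ge0 ?sqr_ge0.
by rewrite /Afac /pfac; lra.
Qed.

Lemma Afac_pfac_bounds (R : realType) (s m y al : R) :
  0 <= al -> 0 < y -> s ^+ 2 <= y -> al <= (2 * y)^-1 -> 0 <= m <= s ->
  0 <= Afac s al <= pfac m al.
Proof.
move=> al_ge0 y_gt0 s2y aly ms.
by rewrite Afac_ge0 ?Afac_le_pfac // (mul_le_half (sqr_ge0 s) s2y).
Qed.

Lemma pfac_le_pfac (R : realType) (m al al' : R) : al' <= al -> pfac m al <= pfac m al'.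
Proof. by move=> al'al; rewrite /pfac lerD2l lerN2 ler_wpM2r ?sqr_ge0. Qed.

Lemma BfacE (R : realType) (Mr Lt c smx al : R) :
  Bfac Mr Lt c smx al = al ^+ 2 * (Mr * Lt * c * smx ^+ 2).
Proof. by rewrite /Bfac !mulrA. Qed.

Lemma Bfac_ge0 (R : realType) (Mr Lt c smx al : R) :
  0 <= Mr * Lt * c * smx ^+ 2 -> 0 <= Bfac Mr Lt c smx al.
Proof. by move=> C_ge0; rewrite BfacE mulr_ge0 ?sqr_ge0. Qed.

Lemma sum_Bfac_le (R : realType) (Mr Lt c smx a b : R) (k n : nat) :
  0 <= Mr * Lt * c * smx ^+ 2 -> 1 < b -> (k <= n)%N ->
  \sum_(k <= j < n.+1) Bfac Mr Lt c smx (a / (b + j%:R))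
    <= a ^+ 2 * Mr * Lt * c * smx ^+ 2 / (b + k%:R - 1).
Proof.
move=> C_ge0 b_gt1 kn.
have bk_gt1 : 1 < b + k%:R by rewrite ltr_wpDr ?ler0n.
have aC_ge0 : 0 <= a ^+ 2 * Mr * Lt * c * smx ^+ 2 := Bfac_ge0 a C_ge0.
have -> : \sum_(k <= j < n.+1) Bfac Mr Lt c smx (a / (b + j%:R))
    = a ^+ 2 * Mr * Lt * c * smx ^+ 2 * \sum_(k <= j < n.+1) ((b + j%:R) ^+ 2)^-1.
  by rewrite mulr_sumr; apply: eq_bigr => j _; rewrite /Bfac expr_div_n; ring.
apply: le_trans (ler_wpM2l aC_ge0 (sum_inv_sqr_le bk_gt1 (leqW kn))) _.
by rewrite ler_wpM2l // gerBl invr_ge0 subr_ge0 ltW // ltr_wpDr ?ler0n.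
Qed.

Lemma prod_pfac_stepsize_le (R : realType) (m a b : R) (k n : nat) :
  0 <= a -> 1 < b -> (k <= n)%N -> (forall i, 0 <= pfac m (a / (b + i%:R))) ->
  \prod_(k.+1 <= i < n.+1) pfac m (a / (b + i%:R))
    <= ((b + k%:R + 1) / (b + n%:R + 1)) `^ (a * m ^+ 2).
Proof.
move=> a_ge0 b_gt1 kn pfac_ge0.
under eq_bigr do rewrite /pfac mulrAC.
have := @prod_one_sub_div_le_powR _ b (a * m ^+ 2) k.+1 n.+1.
rewrite -!natr1 !addrA; apply => //.
- by rewrite addr_gt0 // ltr_wpDr ?ler0n // (lt_trans ltr01).
- by rewrite mulr_ge0 ?sqr_ge0.
- by move=> i _; have := pfac_ge0 i; rewrite /pfac mulrAC.
Qed.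

Theorem lemma15 (R : realType) (M N : nat) (A : 'M[R]_(M, N))
  (sigma : 'I_N -> R) (V : 'M[R]_N) (l : 'I_N) (a b : R) :
  (N <= M)%N ->
  \rank A = N ->
  (forall i j : 'I_N, (i <= j)%N -> sigma j <= sigma i) ->
  (forall i, 0 < sigma i) ->
  V^T *m V = 1%:M ->
  A^T *m A = V *m diag_mx (\row_i (sigma i ^+ 2)) *m V^T ->
  0 < a -> 1 < b ->
  a / b <= 1 / (2 * M%:R * Ltilde A) ->
  forall n k : nat, (k <= n)%N ->
  Bk (sigma l) M%:R (Ltilde A) (condA sigma) (smax sigma) (smin sigma)
     (fun i => a / (b + i%:R)) n k
  <= a ^+ 2 * M%:R * Ltilde A * condA sigma * smax sigma ^+ 2 / (b + k%:R - 1)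
     * ((b + k%:R + 1) / (b + n%:R + 1)) `^ (a * smin sigma ^+ 2).
Proof.
move=> _ _ _ sigma_gt0 VTV AtA a_gt0 b_gt1 ab_le n k kn.
have b_gt0 : 0 < b := lt_trans ltr01 b_gt1.
set s := sigma l; set m := smin sigma; set L := Ltilde A.
have s_le_smax : s <= smax sigma := le_smax sigma l.
have m_gt0 : 0 < m := smin_gt0 (lt_le_trans (sigma_gt0 l) s_le_smax) sigma_gt0.
have s2_le : s ^+ 2 <= M%:R * L := sqr_singular_value_le l VTV AtA.
have ML_gt0 : 0 < M%:R * L := lt_le_trans (exprn_gt0 2 (sigma_gt0 l)) s2_le.
have alpha_ge0 i : 0 <= a / (b + i%:R).
  by rewrite divr_ge0 ?(ltW a_gt0) // addr_ge0 ?(ltW b_gt0).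
have alpha_le i : a / (b + i%:R) <= (2 * (M%:R * L))^-1.
  apply: le_trans (le_div_add_nat (ltW a_gt0) b_gt0 (leq0n i)) _.
  by rewrite mulr0n addr0 mulrA -[leRHS]div1r.
have m_bounds : 0 <= m <= s by rewrite (ltW m_gt0) smin_le.
have Afac_bounds i := Afac_pfac_bounds (alpha_ge0 i) ML_gt0 s2_le (alpha_le i) m_bounds.
have pfac_ge0 i : 0 <= pfac m (a / (b + i%:R)).
  by case/andP: (Afac_bounds i); apply: le_trans.
have pfac_incr i : pfac m (a / (b + i%:R)) <= pfac m (a / (b + i.+1%:R)).
  exact: pfac_le_pfac (le_div_add_nat (ltW a_gt0) b_gt0 (leqnSn i)).
have C_ge0 : 0 <= M%:R * L * condA sigma * smax sigma ^+ 2.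
  by rewrite mulr_ge0 ?sqr_ge0 // mulr_ge0 ?(ltW ML_gt0) // divr_ge0 ?sqr_ge0.
have Bfac_ge0_j j := Bfac_ge0 (a / (b + j%:R)) C_ge0.
apply: le_trans (sum_prod_le_sum_mul_prod _ _ Afac_bounds pfac_incr Bfac_ge0_j) _.
apply: ler_pM.
- by apply: sumr_ge0 => j _.
- by apply: prodr_ge0 => i _.
- exact: sum_Bfac_le.
- exact: prod_pfac_stepsize_le (ltW a_gt0) b_gt1 kn pfac_ge0.
Qed.
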